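(* For every $n>0$: (1) $L_{\mathrm{RCC8}}(\mathcal{RS})=L^{\mathrm{S}}_{\mathrm{RCC8}}(\mathcal{TOP})=L^{\mathrm{S}}_{\mathrm{RCC8}}(\mathbb{R}^n,\mathbb{R}^n_{\mathrm{reg}})$; (2) $L^{\mathrm{fin}}_{\mathrm{RCC8}}(\mathcal{RS})=L^{\mathrm{fin}}_{\mathrm{RCC8}}(\mathcal{TOP})=L^{\mathrm{fin}}_{\mathrm{RCC8}}(\mathbb{R}^n,\mathbb{R}^n_{\mathrm{reg}})$.
   Context: Topological space $\mathfrak T=(U,\mathbb I)$ with interior operator $\mathbb I$ and closure $\mathbb C(s)=U-\mathbb I(U-s)$; $s$ is regular closed if $\mathbb C\mathbb I(s)=s$; $\mathfrak T_{\mathrm{reg}}$ is the set of non-empty regular closed subsets; $\mathbb R^n$ has the Euclidean topology. RCC8 relations on subsets: $\mathrm{dc}$: $s\cap t=\emptyset$; $\mathrm{ec}$: $\mathbb I s\cap\mathbb I t=\emptyset\ne s\cap t$; $\mathrm{po}$: $\mathbb I s\cap\mathbb I t\ne\emptyset$, $s\not\subseteq t$, $t\not\subseteq s$; $\mathrm{eq}$: $s=t$; $\mathrm{tpp}$: $s\subseteq t$, $s\not\subseteq\mathbb I t$, $s\ne t$; $\mathrm{ntpp}$: $s\subseteq\mathbb I t$, $s\neq t$; $\mathrm{tppi},\mathrm{ntppi}$ the inverses. The concrete region structure $\mathfrak R(\mathfrak T,U_{\mathfrak T})$ for a set $U_{\mathfrak T}$ of non-empty regular closed sets has domain $U_{\mathfrak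 T}$ and these eight relations. $\mathcal{TOP}$ is the class of all $\mathfrak R(\mathfrak T,\mathfrak T_{\mathrm{reg}})$. $\mathcal{RS}$ is the class of all general region structures: $\langle W,\dots\rangle$ with $W\ne\emptyset$ and eight mutually disjoint, jointly exhaustive binary relations, $\mathrm{eq}$ the identity, $\mathrm{dc},\mathrm{ec},\mathrm{po}$ symmetric, $\mathrm{tppi},\mathrm{ntppi}$ inverse to $\mathrm{tpp},\mathrm{ntpp}$, satisfying the standard RCC8 composition table (for each composition $r_1\circ r_2$ the relation between $x$ and $z$ lies in the table entry). $\mathcal L_{\mathrm{RCC8}}$: modal language over variables $p_1,p_2,\dots$ with $\neg,\wedge$ and $[r]$ for each relation $r$; a region model is a region structure with valuation; $\mathfrak M,s\models[r]\varphi$ iff $\varphi$ holds at all $t$ with $(s,t)\in r$. For a class $\mathcal S$, $L_{\mathrm{RCC8}}(\mathcal S)$ is the set of formulas true at all regions of all models based on members of $\mathcal S$; $L^{\mathrm S}_{\mathrm{RCC8}}(\mathcal S)$ the set valid in all substructures (restrictions to non-empty subsets of the domain) of members of $\mathcal S$; $L^{\mathrm{fin}}_{\mathrm{RCC8}}(\mathcal S)$ the set valid in all finite substructures. For a single structure we write $L(\mathfrak T,U_{\mathfrak T})$ for $L(\{\mathfrak R(\mathfrak T,U_{\mathfrak T})\})$. *)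

From HB Require Import structures.
From mathcomp Require Import all_boot all_order all_algebra.
From mathcomp Require Import all_classical all_reals all_analysis.
From mathcomp Require Import Rstruct Rstruct_topology.
From Stdlib Require Import List.

Set Implicit Arguments.
Unset Strict Implicit.
Unset Printing Implicit Defensive.

Local Open Scope classical_set_scope.

Inductive rcc8 : Type := DC | EC | PO | EQ | TPP | NTPP | TPPI | NTPPI.

(** The standard RCC8 composition table: [comp r1 r2] lists the possible
    relations between x and z when x r1 y and y r2 z. *)
Definition all8 : list rcc8 := DC :: EC :: PO :: EQ :: TPP :: NTPP :: TPPI :: NTPPI :: nil.

Definition comp (r1 r2 : rcc8) : list rcc8 :=
  match r1, r2 with
  | EQ, r => r :: nil
  | r, EQ => r :: nil
  | DC, DC => all8
  | DC, EC => DC :: EC :: PO :: TPP :: NTPP :: nil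
  | DC, PO => DC :: EC :: PO :: TPP :: NTPP :: nil
  | DC, TPP => DC :: EC :: PO :: TPP :: NTPP :: nil
  | DC, NTPP => DC :: EC :: PO :: TPP :: NTPP :: nil
  | DC, TPPI => DC :: nil
  | DC, NTPPI => DC :: nil
  | EC, DC => DC :: EC :: PO :: TPPI :: NTPPI :: nil
  | EC, EC => DC :: EC :: PO :: TPP :: TPPI :: EQ :: nil
  | EC, PO => DC :: EC :: PO :: TPP :: NTPP :: nil
  | EC, TPP => EC :: PO :: TPP :: NTPP :: nil
  | EC, NTPP => PO :: TPP :: NTPP :: nil
  | EC, TPPI => DC :: EC :: nil
  | EC, NTPPI => DC :: nil
  | PO, DC => DC :: EC :: PO :: TPPI :: NTPPI :: nil
  | PO, EC => DC :: EC :: PO :: TPPI :: NTPPI :: nil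
  | PO, PO => all8
  | PO, TPP => PO :: TPP :: NTPP :: nil
  | PO, NTPP => PO :: TPP :: NTPP :: nil
  | PO, TPPI => DC :: EC :: PO :: TPPI :: NTPPI :: nil
  | PO, NTPPI => DC :: EC :: PO :: TPPI :: NTPPI :: nil
  | TPP, DC => DC :: nil
  | TPP, EC => DC :: EC :: nil
  | TPP, PO => DC :: EC :: PO :: TPP :: NTPP :: nil
  | TPP, TPP => TPP :: NTPP :: nil
  | TPP, NTPP => NTPP :: nil
  | TPP, TPPI => DC :: EC :: PO :: TPP :: TPPI :: EQ :: nil
  | TPP, NTPPI => DC :: EC :: PO :: TPPI :: NTPPI :: nil
  | NTPP, DC => DC :: nil
  | NTPP, EC => DC :: nil
  | NTPP, PO => DC :: EC :: PO :: TPP :: NTPP :: nil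
  | NTPP, TPP => NTPP :: nil
  | NTPP, NTPP => NTPP :: nil
  | NTPP, TPPI => DC :: EC :: PO :: TPP :: NTPP :: nil
  | NTPP, NTPPI => all8
  | TPPI, DC => DC :: EC :: PO :: TPPI :: NTPPI :: nil
  | TPPI, EC => EC :: PO :: TPPI :: NTPPI :: nil
  | TPPI, PO => PO :: TPPI :: NTPPI :: nil
  | TPPI, TPP => PO :: EQ :: TPP :: TPPI :: nil
  | TPPI, NTPP => PO :: TPP :: NTPP :: nil
  | TPPI, TPPI => TPPI :: NTPPI :: nil
  | TPPI, NTPPI => NTPPI :: nil
  | NTPPI, DC => DC :: EC :: PO :: TPPI :: NTPPI :: nil
  | NTPPI, EC => PO :: TPPI :: NTPPI :: nil
  | NTPPI, PO => PO :: TPPI :: NTPPI :: nil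
  | NTPPI, TPP => PO :: TPPI :: NTPPI :: nil
  | NTPPI, NTPP => PO :: TPP :: NTPP :: TPPI :: NTPPI :: EQ :: nil
  | NTPPI, TPPI => NTPPI :: nil
  | NTPPI, NTPPI => NTPPI :: nil
  end.

Definition region_structure (W : Type) (rel : rcc8 -> W -> W -> Prop) : Prop :=
  inhabited W /\
      (forall r1 r2 x y, rel r1 x y -> rel r2 x y -> r1 = r2)   /\
      (forall x y, exists r, rel r x y)                          /\
      (forall x y, rel EQ x y <-> x = y)                         /\
      (forall x y, (rel DC x y -> rel DC y x) /\ (rel EC x y -> rel EC y x)
                   /\ (rel PO x y -> rel PO y x))                /\
      (forall x y, (rel TPPI x y <-> rel TPP y x) /\ (rel NTPPI x y <-> rel NTPP y x)) /\
      (forall r1 r2 r x y z, rel r1 x y -> rel r2 y z -> rel r x z ->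
         List.In r (comp r1 r2)).

Section Topo.
Variable T : topologicalType.

Definition Cl (s : set T) : set T := ~` interior (~` s).

Definition regular_closed (s : set T) : Prop := Cl (interior s) = s.

Definition nonempty_regular_closed (s : set T) : Prop :=
  regular_closed s /\ s !=set0.

Definition top_rel (r : rcc8) (s t : set T) : Prop :=
  match r with
  | DC => s `&` t = set0
  | EC => interior s `&` interior t = set0 /\ s `&` t !=set0
  | PO => interior s `&` interior t !=set0 /\ ~ (s `<=` t) /\ ~ (t `<=` s)
  | EQ => s = t
  | TPP => s `<=` t /\ ~ (s `<=` interior t) /\ s <> t
  | NTPP => s `<=` interior t /\ s <> t
  | TPPI => t `<=` s /\ ~ (t `<=` interior s) /\ t <> s
  | NTPPI => t `<=` interior s /\ t <> s
  end.
End Topo.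

Inductive form : Type :=
  | Var : nat -> form
  | Neg : form -> form
  | And : form -> form -> form
  | Box : rcc8 -> form -> form.

Fixpoint holds (W : Type) (rel : rcc8 -> W -> W -> Prop) (V : nat -> W -> Prop)
    (w : W) (phi : form) : Prop :=
  match phi with
  | Var i => V i w
  | Neg p => ~ holds rel V w p
  | And p q => holds rel V w p /\ holds rel V w q
  | Box r p => forall u, rel r w u -> holds rel V u p
  end.

Definition valid_in (W : Type) (rel : rcc8 -> W -> W -> Prop) (phi : form) : Prop :=
  forall (V : nat -> W -> Prop) (w : W), holds rel V w phi.

Definition restrict (W : Type) (rel : rcc8 -> W -> W -> Prop) (S : set W)
  : rcc8 -> {x : W | S x} -> {x : W | S x} -> Prop :=
  fun r x y => rel r (proj1_sig x) (proj1_sig y).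

Definition valid_sub (W : Type) (rel : rcc8 -> W -> W -> Prop) (phi : form) : Prop :=
  forall S : set W, S !=set0 -> valid_in (@restrict W rel S) phi.

Definition valid_finsub (W : Type) (rel : rcc8 -> W -> W -> Prop) (phi : form) : Prop :=
  forall S : set W, S !=set0 -> finite_set S -> valid_in (@restrict W rel S) phi.

Definition Treg (T : topologicalType) : Type := {s : set T | nonempty_regular_closed s}.

Definition Treg_rel (T : topologicalType) : rcc8 -> Treg T -> Treg T -> Prop :=
  fun r s t => top_rel r (proj1_sig s) (proj1_sig t).

Definition L_RS (phi : form) : Prop :=
  forall (W : Type) (rel : rcc8 -> W -> W -> Prop),
    region_structure rel -> valid_in rel phi.

Definition LS_TOP (phi : form) : Prop :=
  forall T : topologicalType, valid_sub (@Treg_rel T) phi.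

Definition Rn (n : nat) : topologicalType := 'rV[Rdefinitions.R]_n.

Definition LS_Rn (n : nat) (phi : form) : Prop := valid_sub (@Treg_rel (Rn n)) phi.

Definition Lfin_RS (phi : form) : Prop :=
  forall (W : Type) (rel : rcc8 -> W -> W -> Prop),
    region_structure rel -> valid_finsub rel phi.

Definition Lfin_TOP (phi : form) : Prop :=
  forall T : topologicalType, valid_finsub (@Treg_rel T) phi.

Definition Lfin_Rn (n : nat) (phi : form) : Prop := valid_finsub (@Treg_rel (Rn n)) phi.

(* A formula refuted in a region structure is refuted in a countable
   substructure: close the refuting region under chosen witnesses of the
   refuted box subformulas.  Every region structure with an enumeration [e] of
   its regions embeds into the regular closed sets of the line, hence of R^n
   (as cylinders over one coordinate), so every formula valid in the
   substructures of R(R^n, R^n_reg) is valid in RS; conversely every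
   R(T, T_reg) is a region structure and region structures are closed under
   restriction.  The region [z] is realized as a union, over gadgets [g], of
   the half-intervals [[c_g - 4 - h z, c_g]] and [[c_g, c_g + 4 + h z]] around
   well separated centres [c_g], each present or not according to [g]: one
   gadget per region [e i] to realize it alone, and one per pair [e i], [e j]
   to witness PO (overlapping left halves) or EC (halves touching at [c_g]).
   The height [h z], a weighted count of the [e k] that are NTPP of [z], makes
   NTPP parts strictly shorter and hence interior. *)

From HB Require Import structures.
From mathcomp Require Import all_boot all_order all_algebra.
From mathcomp Require Import all_classical all_reals all_analysis.
From mathcomp Require Import Rstruct Rstruct_topology.
From mathcomp.algebra_tactics Require Import lra.
From Stdlib Require List.

Import Order.TTheory GRing.Theory Num.Theory numFieldNormedType.Exports.
Set Implicit Arguments.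
Unset Strict Implicit.
Unset Printing Implicit Defensive.
Local Open Scope classical_set_scope.

Lemma proj1_sig_inj (A : Type) (P : A -> Prop) (x y : {a | P a}) :
  proj1_sig x = proj1_sig y -> x = y.
Proof. by case: x => a pa; case: y => b pb /= ab; apply: eq_exist. Qed.

(* Read [C s t] as "s and t meet", [O s t] as "the interiors of s and t meet",
   [P s t] as "s is included in t" and [Q s t] as "s is included in the
   interior of t". *)
Record contact_axioms (X : Type) (C O P Q : X -> X -> Prop) : Prop := ContactAxioms {
  contact_sym : forall x y, C x y -> C y x;
  overlap_sym : forall x y, O x y -> O y x;
  incl_trans : forall x y z, P x y -> P y z -> P x z;
  ntincl_incl : forall x y, Q x y -> P x y;
  incl_ntincl_trans : forall x y z, P x y -> Q y z -> Q x z;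
  ntincl_incl_trans : forall x y z, Q x y -> P y z -> Q x z;
  contact_incl : forall x y z, C x y -> P y z -> C x z;
  overlap_incl : forall x y z, O x y -> P y z -> O x z;
  contact_ntincl : forall x y z, C x y -> Q y z -> O x z;
  overlap_contact : forall x y, O x y -> C x y;
  incl_overlap : forall x y, P x y -> O x y;
  incl_antisym : forall x y, P x y -> P y x -> x = y;
  incl_refl : forall x, P x x }.

Section RCC8OfContact.
Variables (X : Type) (C O P Q : X -> X -> Prop).
Hypothesis HX : contact_axioms C O P Q.

Definition rcc8_of (r : rcc8) (s t : X) : Prop :=
  match r with
  | DC => ~ C s t
  | EC => ~ O s t /\ C s t
  | PO => O s t /\ ~ P s t /\ ~ P t s
  | EQ => s = t
  | TPP => P s t /\ ~ Q s t /\ s <> t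
  | NTPP => Q s t /\ s <> t
  | TPPI => P t s /\ ~ Q t s /\ t <> s
  | NTPPI => Q t s /\ t <> s
  end.

Ltac add_new t := let T := type of t in
  lazymatch goal with _ : T |- _ => fail | _ => have := t; intro end.

Ltac saturate_step :=
  match goal with
  | H : C ?x ?y |- _ => add_new (contact_sym HX H)
  | H : O ?x ?y |- _ => add_new (overlap_sym HX H)
  | H : Q ?x ?y |- _ => add_new (ntincl_incl HX H)
  | H : O ?x ?y |- _ => add_new (overlap_contact HX H)
  | H : P ?x ?y |- _ => add_new (incl_overlap HX H)
  | H : P ?x ?y, H' : P ?y ?z |- _ => add_new (incl_trans HX H H')
  | H : P ?x ?y, H' : Q ?y ?z |- _ => add_new (incl_ntincl_trans HX H H')
  | H : Q ?x ?y, H' : P ?y ?z |- _ => add_new (ntincl_incl_trans HX H H')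
  | H : C ?x ?y, H' : P ?y ?z |- _ => add_new (contact_incl HX H H')
  | H : O ?x ?y, H' : P ?y ?z |- _ => add_new (overlap_incl HX H H')
  | H : C ?x ?y, H' : Q ?y ?z |- _ => add_new (contact_ntincl HX H H')
  end.

Ltac contact_absurd :=
  repeat match goal with H : _ /\ _ |- _ => destruct H end; subst;
  repeat match goal with x : X |- _ => add_new (incl_refl HX x) end;
  repeat saturate_step;
  first [ match goal with H : ~ ?A, H' : ?A |- _ => exact: H H' end
        | match goal with H : ?x <> ?x |- _ => exact: H erefl end
        | match goal with H : ?x <> ?y, H1 : P ?x ?y, H2 : P ?y ?x |- _ =>
            exact: H (incl_antisym HX H1 H2) end ].

Lemma rcc8_of_comp r1 r2 r x y z :
  rcc8_of r1 x y -> rcc8_of r2 y z -> rcc8_of r x z -> List.In r (comp r1 r2).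
Proof.
case: r1; case: r2; case: r => /= H1 H2 H3;
  solve [ repeat (first [ by left | right ]) | exfalso; contact_absurd ].
Qed.

Lemma rcc8_of_functional r1 r2 x y : rcc8_of r1 x y -> rcc8_of r2 x y -> r1 = r2.
Proof.
by case: r1; case: r2 => //= H1 H2; exfalso; contact_absurd.
Qed.

Lemma rcc8_of_total x y : exists r, rcc8_of r x y.
Proof.
case: (pselect (C x y)) => Cxy; last by exists DC.
case: (pselect (O x y)) => Oxy; last by exists EC.
case: (pselect (x = y)) => [<-|nxy]; first by exists EQ.
have nyx : y <> x by move=> yx; apply: nxy.
case: (pselect (P x y)) => Pxy.
  by case: (pselect (Q x y)) => Qxy; [exists NTPP | exists TPP].
case: (pselect (P y x)) => Pyx; last by exists PO.
by case: (pselect (Q y x)) => Qyx; [exists NTPPI | exists TPPI].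
Qed.

Lemma rcc8_of_region_structure : inhabited X -> region_structure rcc8_of.
Proof.
move=> hX; split=> //; split; first exact: rcc8_of_functional.
split; first exact: rcc8_of_total.
split; first by move=> x y; apply: iff_refl.
split.
  move=> x y /=; split; first by move=> nC /(contact_sym HX).
  split; first by case=> nO Cxy; split; [move=> /(overlap_sym HX) | apply: (contact_sym HX)].
  by case=> Oxy [nPxy nPyx]; split; [apply: (overlap_sym HX) | split].
split; first by move=> x y; split; apply: iff_refl.
exact: rcc8_of_comp.
Qed.

End RCC8OfContact.

Section RegularClosedRegions.
Variable T : topologicalType.

Lemma Cl_meets_nbhs (A B : set T) p : Cl A p -> nbhs p B -> A `&` B !=set0.
Proof.
move=> ClAp Bp; apply: contrapT => nAB; apply: ClAp.
by apply: filterS Bp => q Bq Aq; apply: nAB; exists q.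
Qed.

Lemma nonempty_regular_closed_interior (s : set T) :
  nonempty_regular_closed s -> interior s !=set0.
Proof.
case=> rcs [p sp]; apply: contrapT => /nonemptyPn int0.
move: rcs; rewrite /regular_closed /Cl int0 setC0 interiorT setCT => s0.
by rewrite -s0 in sp.
Qed.

Definition Treg_contact (s t : Treg T) := proj1_sig s `&` proj1_sig t !=set0.
Definition Treg_overlap (s t : Treg T) :=
  interior (proj1_sig s) `&` interior (proj1_sig t) !=set0.
Definition Treg_incl (s t : Treg T) := proj1_sig s `<=` proj1_sig t.
Definition Treg_ntincl (s t : Treg T) := proj1_sig s `<=` interior (proj1_sig t).

Lemma Treg_contact_axioms :
  contact_axioms Treg_contact Treg_overlap Treg_incl Treg_ntincl.
Proof.
split.
- by move=> x y [p [xp yp]]; exists p.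
- by move=> x y [p [xp yp]]; exists p.
- by move=> x y z xy yz p /xy /yz.
- by move=> x y xy p /xy /interior_subset.
- by move=> x y z xy yz p /xy /yz.
- by move=> x y z xy yz; apply: subset_trans xy (interiorS yz).
- by move=> x y z [p [xp yp]] yz; exists p; split => //; apply: yz.
- by move=> x y z [p [xp yp]] yz; exists p; split => //; apply: interiorS yz _ _.
- move=> [x [rcx x0]] y z [p [xp yp]] /= yz.
  by apply: Cl_meets_nbhs (nbhs_interior (yz p yp)); rewrite rcx.
- by move=> x y [p [xp yp]]; exists p; split; apply: interior_subset.
- move=> x y xy; have [p xp] := nonempty_regular_closed_interior (proj2_sig x).
  by exists p; split => //; apply: interiorS xy _ _.
- by move=> x y xy yx; apply: proj1_sig_inj; rewrite eqEsubset.
- by move=> x p.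
Qed.

Lemma Treg_relE :
  @Treg_rel T = rcc8_of Treg_contact Treg_overlap Treg_incl Treg_ntincl.
Proof.
have neq_val (s t : Treg T) : (proj1_sig s <> proj1_sig t) = (s <> t).
  by apply: propext; split=> nst st; apply: nst; [rewrite st | apply: proj1_sig_inj].
apply: funext => r; apply: funext => s; apply: funext => t; apply: propext.
case: r; rewrite /Treg_rel /Treg_contact /Treg_overlap /Treg_incl /Treg_ntincl /=;
  rewrite ?neq_val ?nonemptyPn //.
by split=> [/proj1_sig_inj|->].
Qed.

Lemma Treg_region_structure : inhabited (Treg T) -> region_structure (@Treg_rel T).
Proof. by rewrite Treg_relE; apply/rcc8_of_region_structure/Treg_contact_axioms. Qed.

End RegularClosedRegions.

Lemma restrict_region_structure (W : Type) (rel : rcc8 -> W -> W -> Prop) (S : set W) :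
  region_structure rel -> S !=set0 -> region_structure (@restrict _ rel S).
Proof.
move=> [_ [fun_rel [tot [eqE [sym [inv comp_rel]]]]]] [w Sw].
split; first by constructor; exists w.
split; first by move=> r1 r2 x y; apply: fun_rel.
split; first by move=> x y; apply: tot.
split; first by move=> x y; rewrite /restrict eqE; split=> [/proj1_sig_inj|->].
split; first by move=> x y; apply: sym.
split; first by move=> x y; apply: inv.
by move=> r1 r2 r x y z; apply: comp_rel.
Qed.

Section RegionStructureFacts.
Variables (W : Type) (rel : rcc8 -> W -> W -> Prop).
Hypothesis HW : region_structure rel.

Lemma rel_functional r1 r2 x y : rel r1 x y -> rel r2 x y -> r1 = r2.
Proof. exact: HW.2.1. Qed.

Lemma rel_EQ x y : rel EQ x y -> x = y.
Proof. exact: (HW.2.2.2.1 x y).1. Qed.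

Lemma rel_EQ_refl x : rel EQ x x.
Proof. exact/(HW.2.2.2.1 x x). Qed.

Lemma rel_diag r x : rel r x x -> r = EQ.
Proof. by move/rel_functional; apply; apply: rel_EQ_refl. Qed.

Lemma rel_DC_sym x y : rel DC x y -> rel DC y x.
Proof. exact: (HW.2.2.2.2.1 x y).1. Qed.

Lemma rel_EC_sym x y : rel EC x y -> rel EC y x.
Proof. exact: (HW.2.2.2.2.1 x y).2.1. Qed.

Lemma rel_PO_sym x y : rel PO x y -> rel PO y x.
Proof. exact: (HW.2.2.2.2.1 x y).2.2. Qed.

Lemma rel_TPPI x y : rel TPPI x y <-> rel TPP y x.
Proof. exact: (HW.2.2.2.2.2.1 x y).1. Qed.

Lemma rel_NTPPI x y : rel NTPPI x y <-> rel NTPP y x.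
Proof. exact: (HW.2.2.2.2.2.1 x y).2. Qed.

Lemma rel_total x y : exists r, rel r x y.
Proof. exact: HW.2.2.1. Qed.

Lemma rel_comp r1 r2 x y z : rel r1 x y -> rel r2 y z ->
  exists2 r, rel r x z & List.In r (comp r1 r2).
Proof.
move=> H1 H2; have [r H] := rel_total x z; exists r => //.
exact: HW.2.2.2.2.2.2 H1 H2 H.
Qed.

Ltac compose H1 H2 :=
  let r := fresh "r" in let H := fresh "H" in let Hin := fresh "Hin" in
  have [r H Hin] := rel_comp H1 H2; simpl in Hin;
  repeat (destruct Hin as [Hin|Hin]; [subst r|]); try (destruct Hin).

Definition part (x y : W) := rel EQ x y \/ rel TPP x y \/ rel NTPP x y.

Lemma part_refl x : part x x.
Proof. by left; apply: rel_EQ_refl. Qed.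

Lemma NTPP_part x y : rel NTPP x y -> part x y.
Proof. by right; right. Qed.

Lemma part_trans x y z : part x y -> part y z -> part x z.
Proof.
move=> [/rel_EQ <-|[H1|H1]] // [/rel_EQ <-|[H2|H2]]; rewrite /part; try tauto;
  compose H1 H2; tauto.
Qed.

Lemma NTPP_part_trans x y z : rel NTPP x y -> part y z -> rel NTPP x z.
Proof. by move=> H1 [/rel_EQ <-|[H2|H2]] //; compose H1 H2. Qed.

Lemma part_NTPP_trans x y z : part x y -> rel NTPP y z -> rel NTPP x z.
Proof. by move=> [/rel_EQ ->|[H1|H1]] H2 //; compose H1 H2. Qed.

Lemma part_DC_trans x y z : part x y -> rel DC y z -> rel DC x z.
Proof. by move=> [/rel_EQ ->|[H1|H1]] H2 //; compose H1 H2. Qed.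

Lemma part_EC_trans x y z : part x y -> rel EC y z -> rel DC x z \/ rel EC x z.
Proof. by move=> [/rel_EQ ->|[H1|H1]] H2; [right | compose H1 H2; tauto ..]. Qed.

Lemma part_not_PO x y : part x y -> ~ rel PO x y.
Proof.
move=> [/rel_EQ ->|[H1|H1]] H2; first by have := rel_diag H2.
all: by have := rel_functional H1 H2.
Qed.

Lemma TPP_not_part x y : rel TPP x y -> ~ part y x.
Proof.
move=> H1 [/rel_EQ E|[/rel_TPPI H2|/rel_NTPPI H2]]; first by subst; have := rel_diag H1.
all: by have := rel_functional H1 H2.
Qed.

Lemma NTPP_not_part x y : rel NTPP x y -> ~ part y x.
Proof.
move=> H1 [/rel_EQ E|[/rel_TPPI H2|/rel_NTPPI H2]]; first by subst; have := rel_diag H1.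
all: by have := rel_functional H1 H2.
Qed.

Lemma DC_of_parts a b u v : part a u -> part b v -> rel DC u v -> rel DC a b.
Proof.
move=> au bv /(part_DC_trans au) /rel_DC_sym /(part_DC_trans bv).
exact: rel_DC_sym.
Qed.

Lemma EC_of_parts a b u v : part a u -> part b v -> rel EC u v ->
  rel DC a b \/ rel EC a b.
Proof.
move=> au bv /(part_EC_trans au) [H|H].
  by left; apply: DC_of_parts (part_refl a) bv H.
by case: (part_EC_trans bv (rel_EC_sym H)) => [/rel_DC_sym|/rel_EC_sym]; [left|right].
Qed.

Definition DC_free (F : set W) := forall u v, rel DC u v -> F u -> F v -> False.
Definition EC_free (F : set W) := forall u v, rel EC u v -> F u -> F v -> False.

Lemma DC_free_parts a b : ~ rel DC a b -> DC_free (part a `|` part b).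
Proof.
move=> nab u v H [au|bu] [av|bv].
- by have := rel_diag (DC_of_parts au av H).
- exact/nab/(DC_of_parts au bv H).
- exact/nab/rel_DC_sym/(DC_of_parts bu av H).
- by have := rel_diag (DC_of_parts bu bv H).
Qed.

Lemma EC_free_parts a b : ~ rel DC a b -> ~ rel EC a b -> EC_free (part a `|` part b).
Proof.
have diag x : rel DC x x \/ rel EC x x -> False by case=> /rel_diag.
move=> nDC nEC u v H [au|bu] [av|bv].
- exact/diag/(EC_of_parts au av H).
- by case: (EC_of_parts au bv H) => [/nDC|/nEC].
- by case: (EC_of_parts bu av H) => [/rel_DC_sym/nDC|/rel_EC_sym/nEC].
- exact/diag/(EC_of_parts bu bv H).
Qed.

Lemma DC_free_part a : DC_free (part a).
Proof. by move=> u v H au av; have := rel_diag (DC_of_parts au av H). Qed.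

Lemma EC_free_part a : EC_free (part a).
Proof. by move=> u v H au av; case: (EC_of_parts au av H) => /rel_diag. Qed.

Lemma EC_NTPP_trans a b c : rel EC a b -> rel NTPP b c ->
  rel PO a c \/ rel TPP a c \/ rel NTPP a c.
Proof. by move=> H1 H2; compose H1 H2; tauto. Qed.

Lemma EC_free_contact_side a b : rel EC a b -> EC_free (part a `|` rel NTPP b).
Proof.
move=> ab; have cross u v : part a u -> rel NTPP b v -> ~ rel EC u v.
  move=> au bv uv; have := EC_NTPP_trans ab bv.
  by case: (part_EC_trans au uv) => H [K|[K|K]]; have := rel_functional H K.
move=> u v uv [au|bu] [av|bv].
- exact: EC_free_part uv au av.
- exact: cross au bv uv.
- exact: cross av bu (rel_EC_sym uv).
- exact: EC_free_part uv (NTPP_part bu) (NTPP_part bv).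
Qed.

(* What the two halves [L] and [R] of a gadget need so that the line
   realization turns DC, EC, part-of and NTPP into the topological relations. *)
Record admissible (L R : set W) : Prop := Admissible {
  admissible_DC : DC_free (L `|` R);
  admissible_EC_l : EC_free L;
  admissible_EC_r : EC_free R;
  admissible_part_l : forall u v, part u v -> L u -> L v;
  admissible_part_r : forall u v, part u v -> R u -> R v;
  admissible_NTPP : forall u v, rel NTPP u v -> (L `|` R) u -> L v /\ R v }.

Lemma admissible_part_NTPP a : admissible (part a) (rel NTPP a).
Proof.
have sub : part a `|` rel NTPP a `<=` part a by move=> u [|/NTPP_part].
split.
- by move=> u v H /sub au /sub av; apply: DC_free_part H au av.
- exact: EC_free_part.
- by move=> u v H /NTPP_part au /NTPP_part av; apply: EC_free_part H au av.
- by move=> u v uv au; apply: part_trans au uv.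
- by move=> u v uv au; apply: NTPP_part_trans au uv.
- move=> u v uv /sub au; have av := part_NTPP_trans au uv.
  by split => //; apply: NTPP_part.
Qed.

Lemma admissible_PO a b :
  rel PO a b -> admissible (part a `|` part b) (part a `|` part b).
Proof.
move=> ab; have nDC : ~ rel DC a b by move/(rel_functional ab).
have nEC : ~ rel EC a b by move/(rel_functional ab).
have up u v : part u v -> (part a `|` part b) u -> (part a `|` part b) v.
  by move=> uv [au|bu]; [left|right]; apply: part_trans uv.
split => //; rewrite ?setUid.
- exact: DC_free_parts.
- exact: EC_free_parts.
- exact: EC_free_parts.
- by move=> u v /NTPP_part uv Fu; split; apply: up uv Fu.
Qed.

Lemma admissible_EC a b :
  rel EC a b -> admissible (part a `|` rel NTPP b) (part b `|` rel NTPP a).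
Proof.
move=> ab; have nDC : ~ rel DC a b by move/(rel_functional ab).
have sub : (part a `|` rel NTPP b) `|` (part b `|` rel NTPP a) `<=` part a `|` part b.
  by move=> u [[au|/NTPP_part bu]|[bu|/NTPP_part au]]; [left|right|right|left].
have up c d u v : part u v -> (part c `|` rel NTPP d) u -> (part c `|` rel NTPP d) v.
  move=> uv [cu|du]; first by left; apply: part_trans cu uv.
  by right; apply: NTPP_part_trans du uv.
split.
- by move=> u v uv /sub Fu /sub Fv; apply: DC_free_parts nDC u v uv Fu Fv.
- exact: EC_free_contact_side.
- exact: EC_free_contact_side (rel_EC_sym ab).
- exact: up.
- exact: up.
- move=> u v uv /sub [au|bu].
  + by have av := part_NTPP_trans au uv; split; [left; apply: NTPP_part | right].
  + by have bv := part_NTPP_trans bu uv; split; [right | left; apply: NTPP_part].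
Qed.

(* Gadget kinds: [1] witnesses PO, [2] witnesses EC, any other kind (and a
   kind whose relation fails) realizes [a] alone. *)
Definition gadget (t : nat) (a b : W) : set W * set W :=
  match t with
  | 1 => if `[< rel PO a b >] then (part a `|` part b, part a `|` part b)
         else (part a, rel NTPP a)
  | 2 => if `[< rel EC a b >] then (part a `|` rel NTPP b, part b `|` rel NTPP a)
         else (part a, rel NTPP a)
  | _ => (part a, rel NTPP a)
  end.

Lemma admissible_gadget t a b : admissible (gadget t a b).1 (gadget t a b).2.
Proof.
case: t => [|[|[|t]]] /=; try case: asboolP => H;
  by [apply: admissible_part_NTPP | apply: admissible_PO | apply: admissible_EC].
Qed.

End RegionStructureFacts.

Section Isomorphism.
Variables (W1 W2 : Type) (rel1 : rcc8 -> W1 -> W1 -> Prop).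
Variables (rel2 : rcc8 -> W2 -> W2 -> Prop) (F : W1 -> W2).
Hypothesis F_surj : forall b, exists a, F a = b.
Hypothesis F_inj : injective F.
Hypothesis F_rel : forall r a a', rel2 r (F a) (F a') <-> rel1 r a a'.

Lemma holds_iso V phi a :
  holds rel2 (fun i b => exists2 a, F a = b & V i a) (F a) phi <-> holds rel1 V a phi.
Proof.
elim: phi a => [i|p IH|p IHp q IHq|r p IH] a /=.
- by split=> [[a' /F_inj ->]|]; last exists a.
- by split=> H1 H2; apply: H1; apply/IH.
- by split=> -[H1 H2]; split; [apply/IHp | apply/IHq | apply/IHp | apply/IHq].
- split=> H u; first by move=> /F_rel au; apply/IH; apply: H.
  by have [u' <-] := F_surj u => /F_rel au; apply/IH; apply: H.
Qed.

Lemma valid_in_iso phi : valid_in rel2 phi -> valid_in rel1 phi.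
Proof. by move=> H V a; apply/holds_iso; apply: H. Qed.

End Isomorphism.

Fixpoint subformulas (p : form) : list form :=
  p :: match p with
       | Var _ => nil
       | Neg q => subformulas q
       | And q1 q2 => List.app (subformulas q1) (subformulas q2)
       | Box _ q => subformulas q
       end.

Lemma subformulas_self p : List.In p (subformulas p).
Proof. by case: p => *; left. Qed.

Lemma subformulas_trans p q r :
  List.In q (subformulas p) -> List.In r (subformulas q) -> List.In r (subformulas p).
Proof.
elim: p => [i|p IH|p1 IH1 p2 IH2|s p IH] /=.
- by case=> [<- //|[]].
- by case=> [<- //|H1 H2]; right; apply: IH H1 H2.
- case=> [<- //|H1 H2]; right; apply/List.in_or_app.
  by case: (List.in_app_or _ _ _ H1) => H3; [left; apply: IH1 H3 H2 | right; apply: IH2 H3 H2].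
- by case=> [<- //|H1 H2]; right; apply: IH H1 H2.
Qed.

Section Hull.
Variables (W : Type) (rel : rcc8 -> W -> W -> Prop) (V : nat -> W -> Prop).
Variables (phi : form) (w0 : W).

Definition witness_spec (p : W * nat) (u : W) : Prop :=
  match List.nth p.2 (subformulas phi) (Var 0) with
  | Box r chi => (exists2 u', rel r p.1 u' & ~ holds rel V u' chi) ->
                 rel r p.1 u /\ ~ holds rel V u chi
  | _ => True
  end.

Lemma witness_spec_ex p : exists u, witness_spec p u.
Proof.
rewrite /witness_spec; case: (List.nth _ _ _) => [i|q|q1 q2|r chi]; try by exists w0.
have [[u' ru' nu']|none] := pselect (exists2 u', rel r p.1 u' & ~ holds rel V u' chi).
  by exists u'.
by exists w0.
Qed.

Definition witness : W * nat -> W := projT1 (choice witness_spec_ex).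

Lemma witnessP p : witness_spec p (witness p).
Proof. exact: projT2 (choice witness_spec_ex) p. Qed.

Fixpoint witness_walk (x : W) (l : list nat) : W :=
  if l is k :: l' then witness_walk (witness (x, k)) l' else x.

Definition hull : set W := [set x | exists l, witness_walk w0 l = x].

Lemma hull_witness x k : hull x -> hull (witness (x, k)).
Proof.
case=> l <-; exists (List.app l (k :: nil)).
by elim: l w0 => [|a l IH] y //=.
Qed.

Lemma hull_root : hull w0.
Proof. by exists nil. Qed.

Lemma hull_holds psi : List.In psi (subformulas phi) -> forall x : {x | hull x},
  holds (@restrict _ rel hull) (fun i y => V i (proj1_sig y)) x psi <->
  holds rel V (proj1_sig x) psi.
Proof.
elim: psi => [i|p IH|p IHp q IHq|r p IH] psi_sub x /=.
- by [].
- have := IH (subformulas_trans psi_sub (or_intror (subformulas_self p))) x.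
  by case=> H1 H2; split=> N1 N2; apply: N1; [apply: H2 | apply: H1].
- have p_sub : List.In p (subformulas phi).
    apply: subformulas_trans psi_sub _; right.
    by apply/List.in_or_app; left; apply: subformulas_self.
  have q_sub : List.In q (subformulas phi).
    apply: subformulas_trans psi_sub _; right.
    by apply/List.in_or_app; right; apply: subformulas_self.
  by split=> -[H1 H2]; split;
    [apply/(IHp p_sub) | apply/(IHq q_sub) | apply/(IHp p_sub) | apply/(IHq q_sub)].
- have p_sub := subformulas_trans psi_sub (or_intror (subformulas_self p)).
  split=> H; last by move=> u ru; apply/(IH p_sub); apply: H.
  move=> u ru; apply: contrapT => nu.
  have [k [_ kth]] := List.In_nth _ _ (Var 0) psi_sub.
  have := witnessP (proj1_sig x, k); rewrite /witness_spec /= kth => wit.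
  have [rw nw] := wit (ex_intro2 _ _ u ru nu); apply: nw.
  have hw : hull (witness (proj1_sig x, k)) := hull_witness k (proj2_sig x).
  exact/(IH p_sub (exist _ _ hw))/H.
Qed.

Definition hull_enum (m : nat) : W := witness_walk w0 (odflt nil (unpickle m)).

Lemma hull_enum_surj : hull `<=` range hull_enum.
Proof. by move=> _ [l <-]; exists (pickle l) => //; rewrite /hull_enum pickleK. Qed.

End Hull.

Local Open Scope ring_scope.

Section Height.
Variables (R : realType) (W : Type) (rel : rcc8 -> W -> W -> Prop).
Hypothesis HW : region_structure rel.
Variable e : nat -> W.

Definition height_weight (z : W) (k : nat) : R :=
  if `[< rel NTPP (e k) z >] then geometric 2^-1 2^-1 k else 0.

Definition height (z : W) : R := sup (range (series (height_weight z))).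

Lemma height_weight_ge0 z k : 0 <= height_weight z k.
Proof.
by rewrite /height_weight; case: asboolP => // _; apply: geometric_ge0; rewrite invr_ge0.
Qed.

Lemma series_height_weight_ge0 z N : 0 <= series (height_weight z) N.
Proof. by apply: sumr_ge0 => k _; apply: height_weight_ge0. Qed.

Lemma series_height_weight_le1 z N : series (height_weight z) N <= 1.
Proof.
have half : 0 < 2^-1 :> R by rewrite invr_gt0.
apply: (@le_trans _ _ (series (geometric 2^-1 2^-1) N)).
  apply: ler_sum => k _; rewrite /height_weight; case: asboolP => // _.
  by apply: geometric_ge0; apply: ltW.
apply: le_trans (geometric_le_lim _ (ltW half) half _) _.
  by rewrite gtr0_norm // invf_lt1 // ltr1n.
suff -> : 2^-1 * (1 - 2^-1)^-1 = 1 :> R by [].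
by rewrite [X in X - _](splitr 1) div1r addrK mulfV // invr_eq0.
Qed.

Lemma series_le_height z N : series (height_weight z) N <= height z.
Proof.
apply: ub_le_sup; last by exists N.
by exists 1 => _ [M _ <-]; apply: series_height_weight_le1.
Qed.

Lemma height_ge0 z : 0 <= height z.
Proof. exact: le_trans (series_height_weight_ge0 z 0) (series_le_height z 0). Qed.

Lemma height_le1 z : height z <= 1.
Proof.
apply: ge_sup; first by exists (series (height_weight z) 0), 0.
by move=> _ [N _ <-]; apply: series_height_weight_le1.
Qed.

Lemma height_weight_mono x y k :
  part rel x y -> height_weight x k <= height_weight y k.
Proof.
move=> xy; rewrite /height_weight.
case: asboolP => kx; case: asboolP => ky; rewrite ?lexx //.
- by case: ky; apply: NTPP_part_trans kx xy.
- by apply: geometric_ge0; rewrite invr_ge0.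
Qed.

Lemma height_mono x y : part rel x y -> height x <= height y.
Proof.
move=> xy; apply: ge_sup; first by exists (series (height_weight x) 0), 0.
move=> _ [N _ <-]; apply: le_trans (series_le_height y N).
by apply: ler_sum => k _; apply: height_weight_mono.
Qed.

Lemma height_NTPP_lt k y : rel NTPP (e k) y -> height (e k) < height y.
Proof.
move=> ky; set g : R := geometric 2^-1 2^-1 k.
have g_gt0 : 0 < g by rewrite mulr_gt0 ?exprn_gt0 ?invr_gt0.
have wy : height_weight y k = g by rewrite /height_weight; case: asboolP.
have wk : height_weight (e k) k = 0.
  by rewrite /height_weight; case: asboolP => // /(rel_diag HW).
set d := fun i => height_weight y i - height_weight (e k) i.
have d_ge0 i : 0 <= d i.
  by rewrite subr_ge0; apply/height_weight_mono/NTPP_part.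
suff bound N : series (height_weight (e k)) N <= height y - g.
  have : height (e k) <= height y - g.
    apply: ge_sup; first by exists (series (height_weight (e k)) 0), 0.
    by move=> _ [N _ <-]; apply: bound.
  lra.
pose M := maxn N k.+1.
have gap : g <= series d M.
  have dM : series d k.+1 <= series d M.
    apply: (nondecreasing_series (P := predT)) => [i _ _|]; first exact: d_ge0.
    by rewrite leq_maxr.
  have : 0 <= series d k by apply: sumr_ge0 => i _; apply: d_ge0.
  by rewrite seriesSr /d wy wk subr0 in dM; lra.
have mono : series (height_weight (e k)) N <= series (height_weight (e k)) M.
  apply: (nondecreasing_series (P := predT)) => [i _ _|]; first exact: height_weight_ge0.
  by rewrite leq_maxl.
have dE : series d M = series (height_weight y) M - series (height_weight (e k)) M.
  by rewrite /series /= -sumrB.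
have := series_le_height y M; lra.
Qed.

End Height.

Section RealLine.
Variable R : realType.

Lemma interior_itvoo (A : set R) a b t : a < t -> t < b ->
  (forall s, a < s -> s < b -> A s) -> interior A t.
Proof.
move=> a_t tb sub; rewrite /interior; near=> s.
by apply: sub; near: s; [exact: lt_nbhsr | exact: lt_nbhsl].
Unshelve. all: by end_near. Qed.

Lemma nbhs_meets_right (N : set R) t b : t < b -> nbhs t N ->
  exists s, N s /\ t < s /\ s < b.
Proof.
move=> tb Nt; apply: (@filter_ex _ t^'+); near=> s; split; last split.
- by near: s; apply: filterS Nt => y Ny _.
- by near: s; exact: nbhs_right_gt.
- by near: s; exact: nbhs_right_lt.
Unshelve. all: by end_near. Qed.

Lemma nbhs_meets_left (N : set R) a t : a < t -> nbhs t N ->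
  exists s, N s /\ a < s /\ s < t.
Proof.
move=> a_t Nt; apply: (@filter_ex _ t^'-); near=> s; split; last split.
- by near: s; apply: filterS Nt => y Ny _.
- by near: s; exact: nbhs_left_gt.
- by near: s; exact: nbhs_left_lt.
Unshelve. all: by end_near. Qed.

Lemma nbhs_meets_itvoo (N : set R) a b t : a < b -> a <= t -> t <= b -> nbhs t N ->
  exists s, N s /\ a < s /\ s < b.
Proof.
move=> ab a_t tb Nt; have [tb'|bt] := ltrP t b.
  by have [s [Ns [ts sb]]] := nbhs_meets_right tb' Nt; exists s; split => //; split; lra.
have a_t' : a < t by lra.
by have [s [Ns [a_s st]]] := nbhs_meets_left a_t' Nt; exists s; split => //; split; lra.
Qed.

Lemma nbhs_notin_itvcc (P : Prop) (a b t : R) : ~ (P /\ a <= t /\ t <= b) ->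
  \forall s \near t, ~ (P /\ a <= s /\ s <= b).
Proof.
move=> nt; have [p|np] := pselect P; last by apply: filterS filterT => s _ [].
have [ta|a_t] := ltrP t a.
  by apply: filterS (lt_nbhsl ta) => s sa [_ [a_s _]]; lra.
have [bt|tb] := ltrP b t.
  by apply: filterS (lt_nbhsr bt) => s bs [_ [_ sb]]; lra.
by case: nt.
Qed.

End RealLine.

Section LineRealization.
Variables (R : realType) (W : Type) (G : countType).
Variables (lhalf rhalf : G -> set W) (h : W -> R).
Hypothesis h_ge0 : forall z, 0 <= h z.
Hypothesis h_le1 : forall z, h z <= 1.

Definition center (g : G) : R := (pickle g)%:R * 20.

Definition slot_region (g : G) (z : W) : set R :=
  [set t | lhalf g z /\ center g - 4 - h z <= t /\ t <= center g] `|`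
  [set t | rhalf g z /\ center g <= t /\ t <= center g + 4 + h z].

Definition line_region (z : W) : set R := [set t | exists g, slot_region g z t].

Lemma slot_region_near g z t : slot_region g z t ->
  center g - 5 <= t /\ t <= center g + 5.
Proof.
by have := h_ge0 z; have := h_le1 z; move=> h1 h0 [[_ [t1 t2]]|[_ [t1 t2]]]; split; lra.
Qed.

Lemma center_inj_near g g' t : center g - 8 < t -> t < center g + 8 ->
  center g' - 8 < t -> t < center g' + 8 -> g = g'.
Proof.
rewrite /center => t1 t2 t3 t4; apply: (pcan_inj pickleK).
case: (ltngtP (pickle g) (pickle g')) => [lt|lt|//]; exfalso;
  move: lt; rewrite -(ler_nat R) -natr1 => lt; lra.
Qed.

Lemma line_region_local g z t : center g - 8 < t -> t < center g + 8 ->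
  line_region z t -> slot_region g z t.
Proof.
move=> t1 t2 [g' Pt]; have [t3 t4] := slot_region_near Pt.
by have <- : g' = g by apply: (center_inj_near (t := t)); lra.
Qed.

Lemma slot_region_halves g z t : slot_region g z t -> (lhalf g `|` rhalf g) z.
Proof. by case=> -[H _]; [left | right]. Qed.

Lemma center_in g z : (lhalf g `|` rhalf g) z -> line_region z (center g).
Proof.
have := h_ge0 z => h0.
by case=> H; exists g; [left | right]; split => //; split; lra.
Qed.

Lemma center_notin g z : ~ lhalf g z -> ~ rhalf g z -> ~ line_region z (center g).
Proof.
move=> nL nR Ac.
have Pc : slot_region g z (center g) by apply: line_region_local Ac; lra.
by case: Pc => -[].
Qed.

Lemma interior_left_half g z t : lhalf g z ->
  center g - 4 - h z < t -> t < center g -> interior (line_region z) t.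
Proof.
move=> Lz t1 t2; apply: interior_itvoo t1 t2 _ => s s1 s2.
by exists g; left; split => //; split; lra.
Qed.

Lemma interior_right_half g z t : rhalf g z ->
  center g < t -> t < center g + 4 + h z -> interior (line_region z) t.
Proof.
move=> Rz t1 t2; apply: interior_itvoo t1 t2 _ => s s1 s2.
by exists g; right; split => //; split; lra.
Qed.

Lemma interior_slot g z t : lhalf g z -> rhalf g z ->
  center g - 4 - h z < t -> t < center g + 4 + h z -> interior (line_region z) t.
Proof.
move=> Lz Rz t1 t2; apply: interior_itvoo t1 t2 _ => s s1 s2; exists g.
by case: (lerP s (center g)) => sc; [left | right]; split => //; split; lra.
Qed.

Lemma center_not_interior g z : lhalf g z -> ~ rhalf g z ->
  ~ interior (line_region z) (center g).
Proof.
move=> Lz nRz Ac; have c1 : center g < center g + 1 by lra.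
have [s [As [cs sc]]] := nbhs_meets_right c1 Ac.
have : slot_region g z s by apply: line_region_local As; lra.
by case=> -[H [s1 s2]]; [lra | apply: nRz].
Qed.

Lemma line_region_nbhs_compl z t : ~ line_region z t -> nbhs t (~` line_region z).
Proof.
move=> nAt.
have [[g [g1 g2]]|far] := pselect (exists g, center g - 8 < t /\ t < center g + 8).
  have nL : ~ (lhalf g z /\ center g - 4 - h z <= t /\ t <= center g).
    by move=> Pt; apply: nAt; exists g; left.
  have nR : ~ (rhalf g z /\ center g <= t /\ t <= center g + 4 + h z).
    by move=> Pt; apply: nAt; exists g; right.
  near=> s => As.
  have s1 : center g - 8 < s by near: s; exact: lt_nbhsr.
  have s2 : s < center g + 8 by near: s; exact: lt_nbhsl.
  have nLs : ~ (lhalf g z /\ center g - 4 - h z <= s /\ s <= center g).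
    by near: s; exact: nbhs_notin_itvcc nL.
  have nRs : ~ (rhalf g z /\ center g <= s /\ s <= center g + 4 + h z).
    by near: s; exact: nbhs_notin_itvcc nR.
  by case: (line_region_local s1 s2 As).
near=> s => -[g' Ps]; apply: far; exists g'.
have s1 : t - 1 < s by near: s; apply: lt_nbhsr; lra.
have s2 : s < t + 1 by near: s; apply: lt_nbhsl; lra.
by have := slot_region_near Ps; lra.
Unshelve. all: by end_near. Qed.

Lemma line_region_regular_closed z : regular_closed (line_region z).
Proof.
have := h_ge0 z => h0.
apply: funext => t; apply: propext; split.
  move=> Clt; apply: contrapT => /line_region_nbhs_compl nAt; apply: Clt.
  by apply: filterS nAt => s nAs /interior_subset.
move=> [g [[Lz [t1 t2]]|[Rz [t1 t2]]]] Nt.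
  have [|s [Ns [s1 s2]]] := nbhs_meets_itvoo _ t1 t2 Nt; first lra.
  by apply: Ns; apply: interior_left_half Lz s1 s2.
have [|s [Ns [s1 s2]]] := nbhs_meets_itvoo _ t1 t2 Nt; first lra.
by apply: Ns; apply: interior_right_half Rz s1 s2.
Qed.

Lemma line_region_sub x y :
  (forall g, lhalf g x -> lhalf g y) -> (forall g, rhalf g x -> rhalf g y) ->
  h x <= h y -> line_region x `<=` line_region y.
Proof.
move=> sL sR hxy t [g [[Lx [t1 t2]]|[Rx [t1 t2]]]]; exists g.
  by left; split; [apply: sL | split; lra].
by right; split; [apply: sR | split; lra].
Qed.

Lemma line_region_sub_interior x y :
  (forall g, (lhalf g `|` rhalf g) x -> lhalf g y /\ rhalf g y) ->
  h x < h y -> line_region x `<=` interior (line_region y).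
Proof.
move=> full hxy t [g Pt]; have [Ly Ry] := full g (slot_region_halves Pt).
have := h_ge0 x => h0.
by apply: interior_slot Ly Ry _ _; case: Pt => -[_ [t1 t2]]; lra.
Qed.

Lemma line_region_disjoint x y :
  (forall g, (lhalf g `|` rhalf g) x -> (lhalf g `|` rhalf g) y -> False) ->
  line_region x `&` line_region y = set0.
Proof.
move=> disj; apply/nonemptyPn => -[t [[g Px] Ayt]].
have [t1 t2] := slot_region_near Px.
have Py : slot_region g y t by apply: line_region_local Ayt; lra.
exact: disj g (slot_region_halves Px) (slot_region_halves Py).
Qed.

Lemma line_region_interior_disjoint x y :
  (forall g, lhalf g x -> lhalf g y -> False) ->
  (forall g, rhalf g x -> rhalf g y -> False) ->
  interior (line_region x) `&` interior (line_region y) = set0.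
Proof.
move=> dL dR; apply/nonemptyPn => -[t [Ix Iy]].
have [g Px] := interior_subset Ix.
have [t1 t2] := slot_region_near Px.
have Py : slot_region g y t by apply: line_region_local (interior_subset Iy); lra.
case: Px => [[Lx [t3 t4]]|[Rx [t3 t4]]]; case: Py => [[Ly [t5 t6]]|[Ry [t5 t6]]].
- exact: dL Lx Ly.
- have tc : t = center g by apply/eqP; rewrite eq_le t4 t5.
  by subst t; apply: center_not_interior Lx (fun Rx => dR g Rx Ry) Ix.
- have tc : t = center g by apply/eqP; rewrite eq_le t3 t6.
  by subst t; apply: center_not_interior Ly (fun Ry => dR g Rx Ry) Iy.
- exact: dR Rx Ry.
Qed.

End LineRealization.

Section Realization.
Variables (R : realType) (W : Type) (rel : rcc8 -> W -> W -> Prop).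
Hypothesis HW : region_structure rel.
Variable e : nat -> W.

Definition gadget_at (g : nat * nat * nat) : set W * set W :=
  gadget rel g.1.1 (e g.1.2) (e g.2).

Definition realize : W -> set R :=
  line_region (fun g => (gadget_at g).1) (fun g => (gadget_at g).2) (height R rel e).

Local Notation lhalf g := (gadget_at g).1.
Local Notation rhalf g := (gadget_at g).2.
Local Notation center := (@center R _).
Local Notation self i := (0%N, i, 0%N).
Let hge0 := @height_ge0 R W rel e.
Let hle1 := @height_le1 R W rel e.

Lemma gadget_at_admissible g : admissible rel (lhalf g) (rhalf g).
Proof. exact: admissible_gadget. Qed.

Lemma realize_self i : realize (e i) (center (self i)).
Proof. by apply: (center_in hge0); left; apply: part_refl. Qed.

Lemma realize_not_sub i y : ~ part rel (e i) y -> ~ (realize (e i) `<=` realize y).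
Proof.
move=> iy sub; have := sub _ (realize_self i).
apply: (center_notin hge0 hle1) => //=.
by move=> H; apply: iy; apply: NTPP_part.
Qed.

Lemma realize_DC x y : rel DC x y -> top_rel DC (realize x) (realize y).
Proof.
move=> xy; apply: (line_region_disjoint hge0 hle1) => g.
exact: admissible_DC (gadget_at_admissible g) x y xy.
Qed.

Lemma realize_EC i j : rel EC (e i) (e j) -> top_rel EC (realize (e i)) (realize (e j)).
Proof.
move=> ij; split.
  apply: (line_region_interior_disjoint hge0 hle1) => g.
    exact: admissible_EC_l (gadget_at_admissible g) _ _ ij.
  exact: admissible_EC_r (gadget_at_admissible g) _ _ ij.
have gE : gadget_at (2%N, i, j) =
    (part rel (e i) `|` rel NTPP (e j), part rel (e j) `|` rel NTPP (e i)).
  by rewrite /gadget_at /= asboolT.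
exists (center (2%N, i, j)); split; apply: (center_in hge0); rewrite gE;
  by [left; left; apply: part_refl | right; left; apply: part_refl].
Qed.

Lemma realize_PO i j : rel PO (e i) (e j) -> top_rel PO (realize (e i)) (realize (e j)).
Proof.
move=> ij; split; [|split].
- have gE : lhalf (1%N, i, j) = part rel (e i) `|` part rel (e j).
    by rewrite /gadget_at /= asboolT.
  have hi := hge0 (e i); have hj := hge0 (e j).
  exists (center (1%N, i, j) - 1); split;
    apply: (@interior_left_half _ _ _ _ _ _ (1%N, i, j)); rewrite ?gE;
    by [left; apply: part_refl | right; apply: part_refl | lra].
- by apply: realize_not_sub => /(part_not_PO HW); apply.
- by apply: realize_not_sub => /(part_not_PO HW); apply; apply: rel_PO_sym.
Qed.

Lemma realize_TPP i j : rel TPP (e i) (e j) -> top_rel TPP (realize (e i)) (realize (e j)).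
Proof.
move=> ij; have ij' : part rel (e i) (e j) by right; left.
split; [|split].
- apply: line_region_sub => [g|g|]; last exact: height_mono.
    exact: admissible_part_l (gadget_at_admissible g) _ _ ij'.
  exact: admissible_part_r (gadget_at_admissible g) _ _ ij'.
- move=> sub; have := sub _ (realize_self i).
  apply: (center_not_interior hge0 hle1) => //=.
  by move=> /(rel_functional HW ij).
- by move=> E; apply: (realize_not_sub (TPP_not_part HW ij)); rewrite E.
Qed.

Lemma realize_NTPP i j : rel NTPP (e i) (e j) ->
  top_rel NTPP (realize (e i)) (realize (e j)).
Proof.
move=> ij; split.
  apply: (line_region_sub_interior hge0); last exact: height_NTPP_lt.
  by move=> g; apply: admissible_NTPP (gadget_at_admissible g) _ _ ij.
by move=> E; apply: (realize_not_sub (NTPP_not_part HW ij)); rewrite E.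
Qed.

Lemma realize_rel r i j : rel r (e i) (e j) -> top_rel r (realize (e i)) (realize (e j)).
Proof.
case: r => H.
- exact: realize_DC.
- exact: realize_EC.
- exact: realize_PO.
- by rewrite (rel_EQ HW H).
- exact: realize_TPP.
- exact: realize_NTPP.
- exact: realize_TPP (proj1 (rel_TPPI HW _ _) H).
- exact: realize_NTPP (proj1 (rel_NTPPI HW _ _) H).
Qed.

Lemma realize_nonempty_regular_closed i : nonempty_regular_closed (realize (e i)).
Proof.
split; last by exists (center (self i)); apply: realize_self.
by rewrite /realize; apply: line_region_regular_closed.
Qed.

End Realization.

Local Notation R := Rdefinitions.R.

Section Cylinder.
Variables (n : nat) (hn : (0 < n)%N).

Definition cylinder (A : set R) : set (Rn n) := fun w => A (w ord0 (Ordinal hn)).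

Lemma interior_ballP (A : set R) t :
  interior A t <-> exists2 e : R, 0 < e & forall s, `|t - s| < e -> A s.
Proof. by rewrite /interior nbhs_ballP. Qed.

Lemma interior_Rn_ballP (A : set (Rn n)) w : interior A w <->
  exists2 e : R, 0 < e & forall w' : Rn n, (forall i j, `|w i j - w' i j| < e) -> A w'.
Proof.
rewrite /interior nbhs_ballP.
by split=> -[e e0 H]; exists e => // w' Hw'; apply: H; [split | case: Hw'].
Qed.

Lemma interior_cylinder A : interior (cylinder A) = cylinder (interior A).
Proof.
apply: funext => w; apply: propext; split.
- move=> /interior_Rn_ballP [e e0 H]; apply/interior_ballP; exists e => // s ts.
  pose w' : Rn n := \row_j (if j == Ordinal hn then s else w ord0 j).
  have : cylinder A w' by apply: H => i j; rewrite mxE (ord1 i); case: eqP => [->|_];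
    rewrite ?subrr ?normr0.
  by rewrite /cylinder mxE eqxx.
- move=> /interior_ballP [e e0 H]; apply/interior_Rn_ballP; exists e => // w' Hw'.
  exact: H (Hw' ord0 (Ordinal hn)).
Qed.

Lemma cylinder_surj (s : R) : exists w : Rn n, w ord0 (Ordinal hn) = s.
Proof. by exists (const_mx s); rewrite mxE. Qed.

Lemma cylinder_subE A B : (cylinder A `<=` cylinder B) = (A `<=` B).
Proof.
apply: propext; split=> [AB s As|AB w]; last exact: AB.
by have [w ws] := cylinder_surj s; have := AB w; rewrite /cylinder ws; apply.
Qed.

Lemma cylinder_eqE A B : (cylinder A = cylinder B) = (A = B).
Proof. by rewrite !eqEsubset !cylinder_subE. Qed.

Lemma cylinder_neq0E A : (cylinder A !=set0) = (A !=set0).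
Proof.
apply: propext; split=> -[x Ax]; first by exists (x ord0 (Ordinal hn)).
by have [w wx] := cylinder_surj x; exists w; rewrite /cylinder wx.
Qed.

Lemma top_rel_cylinder r A B : top_rel r (cylinder A) (cylinder B) <-> top_rel r A B.
Proof.
have cylinderI C D : cylinder C `&` cylinder D = cylinder (C `&` D) by [].
have cylinder0 : cylinder set0 = set0 by [].
case: r => /=; rewrite ?interior_cylinder ?cylinderI -?cylinder0;
  by rewrite ?cylinder_eqE ?cylinder_neq0E ?cylinder_subE.
Qed.

Lemma nonempty_regular_closed_cylinder A :
  nonempty_regular_closed (cylinder A) <-> nonempty_regular_closed A.
Proof.
have Cl_cylinder C : Cl (cylinder C) = cylinder (Cl C).
  by rewrite /Cl -[~` cylinder C]/(cylinder (~` C)) interior_cylinder.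
rewrite /nonempty_regular_closed /regular_closed interior_cylinder Cl_cylinder.
by rewrite cylinder_eqE cylinder_neq0E.
Qed.

End Cylinder.

Local Close Scope ring_scope.

Section Embedding.
Variables (n : nat) (hn : (0 < n)%N) (W : Type) (rel : rcc8 -> W -> W -> Prop).
Hypothesis HW : region_structure rel.
Variables (e : nat -> W) (S : set W).
Hypothesis S_enum : S `<=` range e.

Definition realize_Rn (z : W) : set (Rn n) :=
  cylinder hn (@realize R _ rel e z).

Lemma realize_Rn_nonempty_regular_closed i : nonempty_regular_closed (realize_Rn (e i)).
Proof. exact/nonempty_regular_closed_cylinder/realize_nonempty_regular_closed. Qed.

Definition to_Treg (z : W) : Treg (Rn n) :=
  if pselect (nonempty_regular_closed (realize_Rn z)) is left p then exist _ _ p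
  else exist _ _ (realize_Rn_nonempty_regular_closed 0).

Lemma to_Treg_val z : S z -> proj1_sig (to_Treg z) = realize_Rn z.
Proof.
move=> /S_enum [m _ <-]; rewrite /to_Treg; case: pselect => // [[]].
exact: realize_Rn_nonempty_regular_closed.
Qed.

Lemma to_Treg_rel r x y : S x -> S y ->
  Treg_rel r (to_Treg x) (to_Treg y) <-> rel r x y.
Proof.
move=> Sx Sy; have real r' : rel r' x y -> Treg_rel r' (to_Treg x) (to_Treg y).
  move=> xy; move: (Sx) (Sy) => /S_enum [i _ ei] /S_enum [j _ ej].
  rewrite /Treg_rel !to_Treg_val // /realize_Rn -ei -ej.
  apply: (proj2 (top_rel_cylinder hn r' _ _)); apply: realize_rel => //.
  by rewrite ei ej.
split; last exact: real.
have [r' xy] := rel_total HW x y.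
move=> /(rel_functional (Treg_region_structure (inhabits (to_Treg x)))).
by move=> /(_ _ (real _ xy)) ->.
Qed.

Lemma valid_in_embedding phi :
  valid_in (@restrict _ (@Treg_rel (Rn n)) (to_Treg @` S)) phi ->
  valid_in (@restrict _ rel S) phi.
Proof.
pose F (x : {x | S x}) : {t | (to_Treg @` S) t} :=
  exist _ (to_Treg (proj1_sig x)) (ex_intro2 _ _ _ (proj2_sig x) erefl).
apply: (valid_in_iso (F := F)).
- by move=> [t [x Sx xt]]; exists (exist _ x Sx); apply: proj1_sig_inj.
- move=> [a Sa] [b Sb] /(congr1 (fun t => proj1_sig (proj1_sig t))) /=.
  rewrite !to_Treg_val // => ab; apply: proj1_sig_inj => /=.
  by apply/(rel_EQ HW)/(to_Treg_rel EQ Sa Sb); rewrite /Treg_rel !to_Treg_val.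
- by move=> r [a Sa] [b Sb]; apply: to_Treg_rel.
Qed.

End Embedding.

Lemma countable_enum (W : Type) (S : set W) (w : W) :
  countable S -> exists e : nat -> W, S `<=` range e.
Proof.
move=> /countable_injP [f injf].
exists (fun m =>
  if pselect (exists2 x, S x & f x = m) is left ex then projT1 (cid2 ex) else w).
move=> x Sx; exists (f x) => //; case: pselect => [ex|]; last by case; exists x.
case: cid2 => /= y Sy fyx; apply: injf => //; exact: mem_set.
Qed.

Lemma LS_Rn_sub_L_RS n (hn : (0 < n)%N) phi : LS_Rn n phi -> L_RS phi.
Proof.
move=> H W rel HW V w; have hull_w := hull_root rel V phi w.
have S_enum := @hull_enum_surj W rel V phi w.
have /(valid_in_embedding S_enum) := H _ (image_nonempty
  (to_Treg hn HW (hull_enum rel V phi w)) (ex_intro _ w hull_w)).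
move=> /(_ (fun i y => V i (proj1_sig y)) (exist _ w hull_w)).
by move/(hull_holds (subformulas_self phi)).
Qed.

Lemma Lfin_Rn_sub_Lfin_RS n (hn : (0 < n)%N) phi : Lfin_Rn n phi -> Lfin_RS phi.
Proof.
move=> H W rel HW S [w Sw] S_fin.
have [e S_enum] := countable_enum w (finite_set_countable S_fin).
apply: (valid_in_embedding (hn := hn) (HW := HW) S_enum); apply: H.
- by exists (to_Treg hn HW e w), w.
- exact: finite_image.
Qed.

Lemma L_RS_sub_LS_TOP phi : L_RS phi -> LS_TOP phi.
Proof.
move=> H T S [t St]; apply: H.
exact: restrict_region_structure (Treg_region_structure (inhabits t)) (ex_intro _ t St).
Qed.

Lemma Lfin_RS_sub_Lfin_TOP phi : Lfin_RS phi -> Lfin_TOP phi.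
Proof.
by move=> H T S [t St]; apply: H (Treg_region_structure (inhabits t)) _ _; exists t.
Qed.

Theorem theorem4p1 (n : nat) (hn : (0 < n)%N) :
  (forall phi : form,
      (L_RS phi <-> LS_TOP phi) /\ (LS_TOP phi <-> LS_Rn n phi)) /\
  (forall phi : form,
      (Lfin_RS phi <-> Lfin_TOP phi) /\ (Lfin_TOP phi <-> Lfin_Rn n phi)).
Proof.
have Rn_RS := LS_Rn_sub_L_RS hn; have Rnfin_RS := Lfin_Rn_sub_Lfin_RS hn.
split=> phi; split; split.
- exact: L_RS_sub_LS_TOP.
- by move=> H; apply: Rn_RS; apply: H.
- by move=> H; apply: H.
- by move=> H; apply/L_RS_sub_LS_TOP/Rn_RS.
- exact: Lfin_RS_sub_Lfin_TOP.
- by move=> H; apply: Rnfin_RS; apply: H.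
- by move=> H; apply: H.
- by move=> H; apply/Lfin_RS_sub_Lfin_TOP/Rnfin_RS.
Qed.
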